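(* Let $D\subset\mathbb{C}^n$ be a bounded homogeneous domain with $0\in D$, let $\mu:D\to(0,\infty)$ be a weight, let $\psi\in H(D)$ and let $\varphi$ be a holomorphic self-map of $D$. Let $W_{\psi,\varphi}f=\psi\,(f\circ\varphi)$. Then: (a) $W_{\psi,\varphi}:\mathcal{B}(D)\to H^\infty_\mu(D)$ is bounded if and only if $\psi\in H^\infty_\mu(D)$ and $\upsilon_\mu(\psi,\varphi)=\sup_{z\in D}\mu(z)|\psi(z)|\,\omega(\varphi(z))$ is finite; moreover, if it is bounded, then $\|W_{\psi,\varphi}\|=\max\{\|\psi\|_{H^\infty_\mu},\upsilon_\mu(\psi,\varphi)\}$. (b) $W_{\psi,\varphi}:\mathcal{B}_{0*}(D)\to H^\infty_\mu(D)$ is bounded if and only if $\psi\in H^\infty_\mu(D)$ and $\upsilon_{0,\mu}(\psi,\varphi)=\sup_{z\in D}\mu(z)|\psi(z)|\,\omega_0(\varphi(z))$ is finite; moreover, if it is bounded, then $\|W_{\psi,\varphi}\|=\max\{\|\psi\|_{H^\infty_\mu},\upsilon_{0,\mu}(\psi,\varphi)\}$.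
   Context: $H(D)$ denotes the holomorphic functions $D\to\mathbb{C}$. A domain is homogeneous if its group of biholomorphic automorphisms acts transitively. A weight is a continuous strictly positive function $\mu:D\to(0,\infty)$; $H^\infty_\mu(D)=\{f\in H(D):\|f\|_{H^\infty_\mu}=\sup_{z\in D}\mu(z)|f(z)|<\infty\}$. For $f\in H(D)$ and $z\in D$, $Q_f(z)=\sup_{u\in\mathbb{C}^n\setminus\{0\}}\frac{|\nabla f(z)u|}{H_z(u,\bar u)^{1/2}}$, where $\nabla f(z)u=\sum_k \frac{\partial f}{\partial z_k}(z)u_k$ and $H_z$ is the Bergman metric of $D$ at $z$. The Bloch space is $\mathcal{B}(D)=\{f\in H(D):\beta_f=\sup_{z\in D}Q_f(z)<\infty\}$ with norm $\|f\|_{\mathcal{B}}=|f(0)|+\beta_f$. The $*$-little Bloch space is $\mathcal{B}_{0*}(D)=\{f\in\mathcal{B}(D):\lim_{z\to\partial^* D}Q_f(z)=0\}$ (with the Bloch norm), where $\partial^*D$ is the distinguished boundary of $D$. For $z\in D$: $\omega(z)=\sup\{|f(z)|: f\in\mathcal{B}(D), f(0)=0, \|f\|_{\mathcal{B}}\le 1\}$ and $\omega_0(z)=\sup\{|f(z)|: f\in\mathcal{B}_{0*}(D), f(0)=0, \|f\|_{\mathcal{B}}\le 1\}$. *)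

(* All topological notions on C^n are written out by hand (epsilon-delta with
   the Euclidean norm), since R[i] carries no normed-space instance. *)
From HB Require Import structures.
From mathcomp Require Import all_boot all_order all_algebra.
From mathcomp Require Import all_classical all_reals all_analysis.
From mathcomp Require Import complex.

Set Implicit Arguments.
Unset Strict Implicit.
Unset Printing Implicit Defensive.
Import Order.TTheory GRing.Theory Num.Theory.
Import numFieldNormedType.Exports.
Local Open Scope classical_set_scope.
Local Open Scope ring_scope.

Section ComplexSCV.
Variable R : realType.
Local Notation C := R[i].
Variable n : nat.
Local Notation Cn := 'rV[C]_n.

Definition cabs (c : C) : R := Num.sqrt (complex.Re c ^+ 2 + complex.Im c ^+ 2).

Definition vnorm (z : Cn) : R := Num.sqrt (\sum_(k < n) cabs (z 0 k) ^+ 2).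

Definition rC (t : R) : C := Complex t 0.

Definition open_set (D : set Cn) : Prop :=
  forall z, D z -> exists r : R, 0 < r /\ forall w, vnorm (w - z) < r -> D w.

Definition closure_set (S : set Cn) : set Cn :=
  [set z | forall e : R, 0 < e -> exists w, S w /\ vnorm (w - z) < e].

Definition closed_set (S : set Cn) : Prop := closure_set S `<=` S.

Definition connected_set (D : set Cn) : Prop :=
  forall U V : set Cn, open_set U -> open_set V -> D `<=` U `|` V ->
    (D `&` U) !=set0 -> (D `&` V) !=set0 -> (D `&` U `&` V) !=set0.

Definition domain (D : set Cn) : Prop :=
  open_set D /\ D !=set0 /\ connected_set D.

Definition cbounded_set (D : set Cn) : Prop :=
  exists M : R, forall z, D z -> vnorm z <= M.

Definition continuous_on_R (S : set Cn) (g : Cn -> R) : Prop :=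
  forall z, S z -> forall e : R, 0 < e -> exists d : R, 0 < d /\
    forall w, S w -> vnorm (w - z) < d -> `|g w - g z| < e.

Definition continuous_on_C (S : set Cn) (f : Cn -> C) : Prop :=
  forall z, S z -> forall e : R, 0 < e -> exists d : R, 0 < d /\
    forall w, S w -> vnorm (w - z) < d -> cabs (f w - f z) < e.

Definition cderiv_at (f : Cn -> C) (z : Cn) (a : Cn) : Prop :=
  forall e : R, 0 < e -> exists d : R, 0 < d /\
    forall h : Cn, vnorm h < d ->
      cabs (f (z + h) - f z - \sum_(k < n) a 0 k * h 0 k) <= e * vnorm h.

(* f is holomorphic on D (f in H(D); values outside D are irrelevant) *)
Definition holo_on (D : set Cn) (f : Cn -> C) : Prop :=
  forall z, D z -> exists a, cderiv_at f z a.

Definition grad (f : Cn -> C) (z : Cn) : Cn := xget 0 (cderiv_at f z).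

Definition nablaf (f : Cn -> C) (z u : Cn) : C :=
  \sum_(k < n) grad f z 0 k * u 0 k.

Definition holo_map (D : set Cn) (F : Cn -> Cn) : Prop :=
  forall k : 'I_n, holo_on D (fun z => F z 0 k).

Definition holo_self_map (D : set Cn) (phi : Cn -> Cn) : Prop :=
  holo_map D phi /\ (forall z, D z -> D (phi z)).

Definition automorphism (D : set Cn) (F : Cn -> Cn) : Prop :=
  holo_self_map D F /\ exists G, holo_self_map D G /\
    (forall z, D z -> G (F z) = z) /\ (forall z, D z -> F (G z) = z).

Definition homogeneous (D : set Cn) : Prop :=
  forall z w, D z -> D w -> exists F, automorphism D F /\ F z = w.

(* iterated Lebesgue integral over R^m of a nonnegative function of the
   coordinates x_0, ..., x_(m-1) (coordinates >= m are set to 0) *)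
Fixpoint iint (m : nat) (g : (nat -> R) -> \bar R) : \bar R :=
  match m with
  | 0 => g (fun _ => 0)
  | m'.+1 => (\int[@lebesgue_measure R]_t
                 iint m' (fun x => g (fun k => if k == m' then t else x k)))%E
  end.

Definition embedC (x : nat -> R) : Cn :=
  \row_(k < n) Complex (x (k.*2)%N) (x (k.*2.+1)%N).

Definition L2sq (D : set Cn) (f : Cn -> C) : \bar R :=
  iint (n.*2)%N (fun x => if `[< D (embedC x) >]
                          then ((cabs (f (embedC x))) ^+ 2)%:E else 0%E).

Definition bergman_ball (D : set Cn) : set (Cn -> C) :=
  [set f | holo_on D f /\ (L2sq D f <= 1)%E].

(* Bergman kernel on the diagonal:
   K(z,z) = sup { |f(z)|^2 : f in A^2(D), ||f||_2 <= 1 } *)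
Definition bergman_kernel_diag (D : set Cn) (z : Cn) : R :=
  sup [set cabs (f z) ^+ 2 | f in bergman_ball D].

Definition rdir (v : Cn) (g : Cn -> R) (z : Cn) : R :=
  lim ((fun t : R => (g (z + rC t *: v) - g z) / t) @ (0 : R)^').

(* Bergman metric H_z(u, ubar) = sum_{j,k} d^2 log K(z,z)/dz_j dzbar_k u_j ubar_k,
   written via the identity  sum_{j,k} g_{j kbar} u_j ubar_k
        = 1/4 (D_u D_u g + D_{iu} D_{iu} g)(z)   (real directional derivatives) *)
Definition bergman_metric (D : set Cn) (z u : Cn) : R :=
  let g := fun w => ln (bergman_kernel_diag D w) in
  let iu := Complex 0 1 *: u in
  (rdir u (rdir u g) z + rdir iu (rdir iu g) z) / 4.

Definition Qf (D : set Cn) (f : Cn -> C) (z : Cn) : \bar R :=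
  ereal_sup [set (cabs (nablaf f z u) / Num.sqrt (bergman_metric D z u))%:E
            | u in [set u : Cn | u != 0]].

Definition beta (D : set Cn) (f : Cn -> C) : \bar R :=
  ereal_sup [set Qf D f z | z in D].

Definition bloch_norm (D : set Cn) (f : Cn -> C) : \bar R :=
  ((cabs (f 0))%:E + beta D f)%E.

Definition bloch (D : set Cn) : set (Cn -> C) :=
  [set f | holo_on D f /\ (beta D f < +oo)%E].

(* Shilov (distinguished) boundary: intersection of all closed subsets S of
   the closure of D on which every f in A(D) (continuous on cl D, holomorphic
   on D) attains the sup of |f| over cl D *)
Definition disc_alg (D : set Cn) : set (Cn -> C) :=
  [set f | continuous_on_C (closure_set D) f /\ holo_on D f].

Definition boundary_for (D S : set Cn) : Prop :=
  S `<=` closure_set D /\ closed_set S /\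
  forall f, disc_alg D f ->
    (ereal_sup [set (cabs (f w))%:E | w in closure_set D]
      <= ereal_sup [set (cabs (f w))%:E | w in S])%E.

Definition distinguished_boundary (D : set Cn) : set Cn :=
  [set z | forall S, boundary_for D S -> S z].

Definition vanishes_at_dboundary (D : set Cn) (f : Cn -> C) : Prop :=
  forall e : R, 0 < e -> exists d : R, 0 < d /\
    forall z, D z -> (exists xi, distinguished_boundary D xi /\ vnorm (z - xi) < d) ->
      (Qf D f z < e%:E)%E.

Definition little_bloch (D : set Cn) : set (Cn -> C) :=
  [set f | bloch D f /\ vanishes_at_dboundary D f].

Definition omega (D : set Cn) (z : Cn) : \bar R :=
  ereal_sup [set (cabs (f z))%:E
            | f in [set f | bloch D f /\ f 0 = 0 /\ (bloch_norm D f <= 1)%E]].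

Definition omega0 (D : set Cn) (z : Cn) : \bar R :=
  ereal_sup [set (cabs (f z))%:E
            | f in [set f | little_bloch D f /\ f 0 = 0 /\ (bloch_norm D f <= 1)%E]].

Definition weight (D : set Cn) (mu : Cn -> R) : Prop :=
  continuous_on_R D mu /\ (forall z, D z -> 0 < mu z).

Definition Hinf_norm (D : set Cn) (mu : Cn -> R) (f : Cn -> C) : \bar R :=
  ereal_sup [set (mu z * cabs (f z))%:E | z in D].

Definition Hinf (D : set Cn) (mu : Cn -> R) : set (Cn -> C) :=
  [set f | holo_on D f /\ (Hinf_norm D mu f < +oo)%E].

Definition Wop (psi : Cn -> C) (phi : Cn -> Cn) (f : Cn -> C) : Cn -> C :=
  fun z => psi z * f (phi z).

Definition Wbounded (D : set Cn) (X : set (Cn -> C)) (mu : Cn -> R)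
    (psi : Cn -> C) (phi : Cn -> Cn) : Prop :=
  (forall f, X f -> Hinf D mu (Wop psi phi f)) /\
  exists M : R, forall f, X f ->
    (Hinf_norm D mu (Wop psi phi f) <= M%:E * bloch_norm D f)%E.

Definition Wnorm (D : set Cn) (X : set (Cn -> C)) (mu : Cn -> R)
    (psi : Cn -> C) (phi : Cn -> Cn) : \bar R :=
  ereal_sup [set Hinf_norm D mu (Wop psi phi f)
            | f in [set f | X f /\ (bloch_norm D f <= 1)%E]].

Definition upsilon (D : set Cn) (mu : Cn -> R) (psi : Cn -> C) (phi : Cn -> Cn)
  : \bar R :=
  ereal_sup [set ((mu z * cabs (psi z))%:E * omega D (phi z))%E | z in D].

Definition upsilon0 (D : set Cn) (mu : Cn -> R) (psi : Cn -> C) (phi : Cn -> Cn)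
  : \bar R :=
  ereal_sup [set ((mu z * cabs (psi z))%:E * omega0 D (phi z))%E | z in D].

End ComplexSCV.

From HB Require Import structures.
From mathcomp Require Import all_boot all_order all_algebra.
From mathcomp Require Import all_classical all_reals all_analysis.
From mathcomp Require Import complex.
From mathcomp Require Import ring lra.

(* Testing W on the constant 1 and on the functions f with f(0) = 0 and
   ||f|| <= 1 gives ||W|| >= ||psi|| and ||W|| >= upsilon.  Conversely, split
   f o phi = f(0) + (f o phi - f(0)): the function (f - f(0)) / (beta_f + e) is
   admissible in the supremum defining omega (the e > 0 allows beta_f = 0), so
   mu |psi| |f o phi| <= ||psi|| |f(0)| + upsilon beta_f <= max(||psi||, upsilon) ||f||.
   Only the facts that the space contains the constants and is stable under
   f |-> k (f - d) are used, so the argument covers B and B_0* alike. *)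

Set Implicit Arguments.
Unset Strict Implicit.
Unset Printing Implicit Defensive.
Import Order.TTheory GRing.Theory Num.Theory.
Local Open Scope classical_set_scope.
Local Open Scope ring_scope.

Section ComplexVectors.
Variables (R : realType) (n : nat).
Local Notation C := R[i].
Local Notation Cn := 'rV[C]_n.

Lemma cabsE (z : C) : ((cabs z)%:C)%C = `|z|.
Proof. by rewrite normc_def. Qed.

Lemma cabs_ge0 (z : C) : 0 <= cabs z.
Proof. exact: sqrtr_ge0. Qed.

Lemma cabsM (x y : C) : cabs (x * y) = cabs x * cabs y.
Proof. by apply: complexI; rewrite rmorphM /= !cabsE normrM. Qed.

Lemma ler_cabsD (x y : C) : cabs (x + y) <= cabs x + cabs y.
Proof. by rewrite -lecR rmorphD /= !cabsE ler_normD. Qed.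

Lemma cabsN (x : C) : cabs (- x) = cabs x.
Proof. by apply: complexI; rewrite !cabsE normrN. Qed.

Lemma cabs0 : cabs (0 : C) = 0.
Proof. by apply: complexI; rewrite !cabsE normr0. Qed.

Lemma cabs1 : cabs (1 : C) = 1.
Proof. by apply: complexI; rewrite !cabsE normr1. Qed.

Lemma cabs_rC (t : R) : cabs (rC t) = `|t|.
Proof. by rewrite /cabs /rC /= expr0n addr0 sqrtr_sqr. Qed.

Lemma cabs_eq0 (x : C) : (cabs x == 0) = (x == 0).
Proof.
by rewrite -[x == 0]normr_eq0 -cabsE -[0 : C]/((0 : R)%:C)%C (inj_eq (@complexI _)).
Qed.

Lemma ler_cabs_sum (I : finType) (F : I -> C) :
  cabs (\sum_i F i) <= \sum_i cabs (F i).
Proof.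
rewrite -lecR cabsE rmorph_sum; apply: le_trans (ler_norm_sum _ _ _) _.
by apply: ler_sum => i _; rewrite -cabsE.
Qed.

Lemma vnorm_ge0 (h : Cn) : 0 <= vnorm h.
Proof. exact: sqrtr_ge0. Qed.

Lemma cabs_le_vnorm (h : Cn) k : cabs (h 0 k) <= vnorm h.
Proof.
rewrite -[cabs _]ger0_norm ?cabs_ge0 // -sqrtr_sqr ler_sqrt; last first.
  by apply: sumr_ge0 => i _; rewrite sqr_ge0.
by rewrite (bigD1 k) //= lerDl; apply: sumr_ge0 => i _; exact: sqr_ge0.
Qed.

Lemma vnorm_le_sum (h : Cn) : vnorm h <= \sum_k cabs (h 0 k).
Proof.
have S0 : 0 <= \sum_k cabs (h 0 k) by apply: sumr_ge0 => i _; exact: cabs_ge0.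
rewrite -[X in _ <= X]ger0_norm // -sqrtr_sqr ler_sqrt ?sqr_ge0 //.
rewrite expr2 big_distrl /=; apply: ler_sum => i _.
rewrite expr2 ler_wpM2l ?cabs_ge0 //.
by rewrite (bigD1 i) //= lerDl; apply: sumr_ge0 => j _; exact: cabs_ge0.
Qed.

Definition cdot (a h : Cn) : C := \sum_(k < n) a 0 k * h 0 k.

Lemma cabs_cdot_le (a h : Cn) : cabs (cdot a h) <= (\sum_k cabs (a 0 k)) * vnorm h.
Proof.
apply: le_trans (ler_cabs_sum _) _; rewrite big_distrl /=; apply: ler_sum => k _.
by rewrite cabsM ler_wpM2l ?cabs_ge0 ?cabs_le_vnorm.
Qed.

Definition axis_vec (j : 'I_n) (t : R) : Cn := \row_k (if k == j then rC t else 0).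

Lemma vnorm_axis_vec j t : 0 <= t -> vnorm (axis_vec j t) = t.
Proof.
move=> t0; rewrite /vnorm (bigD1 j) //= big1 => [|k /negbTE kj]; last first.
  by rewrite mxE kj cabs0 expr0n.
by rewrite mxE eqxx cabs_rC addr0 sqrtr_sqr !ger0_norm.
Qed.

Lemma cdot_axis_vec (a : Cn) j t : cdot a (axis_vec j t) = a 0 j * rC t.
Proof.
rewrite /cdot (bigD1 j) //= big1 => [|k /negbTE kj]; last by rewrite mxE kj mulr0.
by rewrite mxE eqxx addr0.
Qed.

End ComplexVectors.

Section LandauAtZero.
Variables (R : realType) (n : nat).
Local Notation Cn := 'rV[R[i]]_n.

Definition little_o0 (g : Cn -> R) := forall e : R, 0 < e -> exists d : R, 0 < d /\
  forall h, vnorm h < d -> g h <= e * vnorm h.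

Definition big_O0 (g : Cn -> R) := exists K d : R, 0 <= K /\ 0 < d /\
  forall h, vnorm h < d -> g h <= K * vnorm h.

Lemma little_o0_le (g1 g2 : Cn -> R) :
  (forall h, g1 h <= g2 h) -> little_o0 g2 -> little_o0 g1.
Proof.
move=> le12 o2 e e0; have [d [d0 Hd]] := o2 e e0.
by exists d; split => // h hd; exact: le_trans (le12 h) (Hd h hd).
Qed.

Lemma big_O0_le (g1 g2 : Cn -> R) :
  (forall h, g1 h <= g2 h) -> big_O0 g2 -> big_O0 g1.
Proof.
move=> le12 [K [d [K0 [d0 Hd]]]]; exists K, d; split => //; split => //.
by move=> h hd; exact: le_trans (le12 h) (Hd h hd).
Qed.

Lemma little_o0_big_O0 (g : Cn -> R) : little_o0 g -> big_O0 g.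
Proof. by move=> o; have [d [d0 Hd]] := o 1 ltr01; exists 1, d. Qed.

Lemma little_o0D (g1 g2 : Cn -> R) :
  little_o0 g1 -> little_o0 g2 -> little_o0 (fun h => g1 h + g2 h).
Proof.
move=> o1 o2 e e0; have e2 : 0 < e / 2 by rewrite divr_gt0.
have [d1 [d10 Hd1]] := o1 _ e2; have [d2 [d20 Hd2]] := o2 _ e2.
exists (Num.min d1 d2); split; first by rewrite lt_min d10.
move=> h; rewrite lt_min => /andP [h1 h2].
by apply: le_trans (lerD (Hd1 h h1) (Hd2 h h2)) _; rewrite -mulrDl -splitr.
Qed.

Lemma big_O0D (g1 g2 : Cn -> R) :
  big_O0 g1 -> big_O0 g2 -> big_O0 (fun h => g1 h + g2 h).
Proof.
move=> [K1 [d1 [K10 [d10 Hd1]]]] [K2 [d2 [K20 [d20 Hd2]]]].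
exists (K1 + K2), (Num.min d1 d2); split; first by rewrite addr_ge0.
split=> [|h]; first by rewrite lt_min d10.
rewrite lt_min => /andP [h1 h2].
by apply: le_trans (lerD (Hd1 h h1) (Hd2 h h2)) _; rewrite -mulrDl.
Qed.

Lemma little_o0_sum (I : Type) (s : seq I) (g : I -> Cn -> R) :
  (forall i, little_o0 (g i)) -> little_o0 (fun h => \sum_(i <- s) g i h).
Proof.
move=> o; elim: s => [|i s IH].
  move=> e e0; exists 1; split => // h _.
  by rewrite big_nil mulr_ge0 ?vnorm_ge0 ?ltW.
by apply: little_o0_le (little_o0D (o i) IH) => h; rewrite big_cons.
Qed.

Lemma big_O0_sum (I : Type) (s : seq I) (g : I -> Cn -> R) :
  (forall i, big_O0 (g i)) -> big_O0 (fun h => \sum_(i <- s) g i h).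
Proof.
move=> O; elim: s => [|i s IH].
  by exists 0, 1; split => //; split => // h _; rewrite big_nil mul0r.
by apply: big_O0_le (big_O0D (O i) IH) => h; rewrite big_cons.
Qed.

Lemma little_o0Z (c : R) (g : Cn -> R) :
  0 <= c -> little_o0 g -> little_o0 (fun h => c * g h).
Proof.
move=> c0 o e e0; have c1 : 0 < c + 1 by rewrite ltr_wpDl.
have [d [d0 Hd]] := o _ (divr_gt0 e0 c1); exists d; split => // h hd.
apply: le_trans (ler_wpM2l c0 (Hd h hd)) _.
rewrite mulrA ler_wpM2r ?vnorm_ge0 // mulrCA ger_pMr //.
by rewrite ler_pdivrMr ?mul1r ?lerDl.
Qed.

Lemma little_o0M (g1 g2 : Cn -> R) : (forall h, 0 <= g1 h) -> (forall h, 0 <= g2 h) ->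
  big_O0 g1 -> big_O0 g2 -> little_o0 (fun h => g1 h * g2 h).
Proof.
move=> p1 p2 [K1 [d1 [K10 [d10 Hd1]]]] [K2 [d2 [K20 [d20 Hd2]]]] e e0.
have P1 : 0 < K1 * K2 + 1 by rewrite ltr_wpDl ?mulr_ge0.
have d3 : 0 < e / (K1 * K2 + 1) by rewrite divr_gt0.
exists (Num.min (Num.min d1 d2) (e / (K1 * K2 + 1))); split.
  by rewrite !lt_min d10 d20 d3.
move=> h; rewrite !lt_min => /andP [/andP [h1 h2] h3].
apply: le_trans (ler_pM (p1 h) (p2 h) (Hd1 h h1) (Hd2 h h2)) _.
have v0 := vnorm_ge0 h.
rewrite ltr_pdivlMr // in h3.
have hP : K1 * K2 * vnorm h <= e.
  by apply: le_trans (ltW h3); rewrite mulrC ler_wpM2l // lerDl.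
rewrite mulrACA -expr2 expr2 mulrA ler_wpM2r //.
Qed.

Lemma little_o0_comp (g : Cn -> R) (k : Cn -> Cn) :
  little_o0 g -> big_O0 (fun h => vnorm (k h)) -> little_o0 (fun h => g (k h)).
Proof.
move=> o [K [d1 [K0 [d10 Hd1]]]] e e0; have K1 : 0 < K + 1 by rewrite ltr_wpDl.
have [d2 [d20 Hd2]] := o _ (divr_gt0 e0 K1).
exists (Num.min d1 (d2 / (K + 1))); split; first by rewrite lt_min d10 divr_gt0.
move=> h; rewrite lt_min => /andP [h1 h2].
have v0 := vnorm_ge0 h; have kh := Hd1 h h1.
rewrite ltr_pdivlMr // in h2.
have kd : vnorm (k h) < d2 by apply: le_lt_trans kh _; nra.
apply: le_trans (Hd2 _ kd) _; apply: le_trans (ler_wpM2l (ltW (divr_gt0 e0 K1)) kh) _.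
rewrite mulrCA mulrA ler_wpM2r // mulrCA ger_pMr //.
by rewrite ler_pdivrMr ?mul1r ?lerDl.
Qed.

End LandauAtZero.

Section ComplexDerivative.
Variables (R : realType) (n : nat).
Local Notation C := R[i].
Local Notation Cn := 'rV[C]_n.

Lemma cderiv_atE (f : Cn -> C) (z a : Cn) :
  cderiv_at f z a = little_o0 (fun h => cabs (f (z + h) - f z - cdot a h)).
Proof. by []. Qed.

Lemma cderiv_at_big_O0 (f : Cn -> C) (z a : Cn) :
  cderiv_at f z a -> big_O0 (fun h => cabs (f (z + h) - f z)).
Proof.
rewrite cderiv_atE => /little_o0_big_O0 df.
have lin : big_O0 (fun h => cabs (cdot a h)).
  exists (\sum_k cabs (a 0 k)), 1; split; first by apply: sumr_ge0 => k _; exact: cabs_ge0.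
  by split => // h _; exact: cabs_cdot_le.
apply: big_O0_le (big_O0D df lin) => h /=.
by apply: le_trans (ler_cabsD _ _); rewrite subrK.
Qed.

Lemma cderiv_at_unique (f : Cn -> C) (z a b : Cn) :
  cderiv_at f z a -> cderiv_at f z b -> a = b.
Proof.
move=> da db; apply/rowP => j; apply/eqP; rewrite -subr_eq0 -cabs_eq0.
set x := cabs (a 0 j - b 0 j); rewrite eq_le cabs_ge0 andbT.
apply/negP => /negP; rewrite -ltNge => x0.
have e0 : 0 < x / 4 by rewrite divr_gt0.
have [d1 [d10 Hd1]] := da _ e0; have [d2 [d20 Hd2]] := db _ e0.
set t := Num.min d1 d2 / 2.
have t0 : 0 < t by rewrite divr_gt0 // lt_min d10.
have td : t < Num.min d1 d2 by rewrite /t ltr_pdivrMr // ltr_pMr ?lt_min ?d10 // ltr1n.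
move: td; rewrite lt_min => /andP [td1 td2].
(* Along h = t e_j the two remainders differ by exactly (a_j - b_j) t. *)
have := Hd1 (axis_vec j t); have := Hd2 (axis_vec j t).
rewrite vnorm_axis_vec ?(ltW t0) // => /(_ td2) rb /(_ td1) ra.
have : x * t <= x / 4 * t + x / 4 * t.
  have -> : x * t = cabs ((f (z + axis_vec j t) - f z - cdot b (axis_vec j t))
                        - (f (z + axis_vec j t) - f z - cdot a (axis_vec j t))).
    rewrite /x -[t in LHS](ger0_norm (ltW t0)) -cabs_rC -cabsM !cdot_axis_vec.
    by congr cabs; ring.
  by apply: le_trans (ler_cabsD _ _) _; rewrite cabsN lerD.
by rewrite -mulrDl ler_pM2r //; lra.
Qed.

Lemma cderiv_at_const (c : C) (z : Cn) : cderiv_at (fun _ => c) z 0.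
Proof.
move=> e e0; exists 1; split => // h _.
rewrite subrr /cdot big1 => [|k _]; last by rewrite mxE mul0r.
by rewrite subr0 cabs0 mulr_ge0 ?vnorm_ge0 ?ltW.
Qed.

Lemma cderiv_at_affine (f : Cn -> C) (z a : Cn) (k d : C) :
  cderiv_at f z a -> cderiv_at (fun w => k * (f w - d)) z (k *: a).
Proof.
rewrite !cderiv_atE => /(little_o0Z (cabs_ge0 k)); apply: little_o0_le => h.
have -> : cdot (k *: a) h = k * cdot a h.
  by rewrite /cdot mulr_sumr; apply: eq_bigr => j _; rewrite mxE mulrA.
have -> : k * (f (z + h) - d) - k * (f z - d) - k * cdot a h =
    k * (f (z + h) - f z - cdot a h) by ring.
by rewrite cabsM.
Qed.

Lemma cderiv_at_mul (f g : Cn -> C) (z a b : Cn) :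
  cderiv_at f z a -> cderiv_at g z b ->
  cderiv_at (fun w => f w * g w) z (f z *: b + g z *: a).
Proof.
move=> da db.
have rem := little_o0D (little_o0D (little_o0Z (cabs_ge0 (f z)) db)
  (little_o0Z (cabs_ge0 (g z)) da))
  (little_o0M (fun h => cabs_ge0 _) (fun h => cabs_ge0 _)
    (cderiv_at_big_O0 da) (cderiv_at_big_O0 db)).
rewrite cderiv_atE; apply: little_o0_le rem => h /=.
have -> : cdot (f z *: b + g z *: a) h = f z * cdot b h + g z * cdot a h.
  rewrite /cdot !mulr_sumr -big_split /=; apply: eq_bigr => k _.
  by rewrite !mxE; ring.
have -> : f (z + h) * g (z + h) - f z * g z - (f z * cdot b h + g z * cdot a h) =
    f z * (g (z + h) - g z - cdot b h) + g z * (f (z + h) - f z - cdot a h) +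
    (f (z + h) - f z) * (g (z + h) - g z) by ring.
rewrite -!cabsM; apply: le_trans (ler_cabsD _ _) _.
by rewrite lerD2r ler_cabsD.
Qed.

Lemma cderiv_at_comp (F : Cn -> C) (G : Cn -> Cn) (z a : Cn) (B : 'I_n -> Cn) :
  cderiv_at F (G z) a -> (forall j, cderiv_at (fun w => G w 0 j) z (B j)) ->
  cderiv_at (fun w => F (G w)) z (\row_k \sum_j a 0 j * B j 0 k).
Proof.
move=> dF dG; pose dGh h := G (z + h) - G z.
have dGh_O : big_O0 (fun h => vnorm (dGh h)).
  apply: big_O0_le (big_O0_sum (index_enum 'I_n) (fun j => cderiv_at_big_O0 (dG j))).
  move=> h; apply: le_trans (vnorm_le_sum _) _.
  by apply: ler_sum => j _; rewrite !mxE.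
have outer := little_o0_comp dF dGh_O.
have inner := little_o0_sum (index_enum 'I_n) (fun j => little_o0Z (cabs_ge0 (a 0 j)) (dG j)).
rewrite cderiv_atE; apply: little_o0_le (little_o0D outer inner) => h /=.
rewrite /dGh [G z + _]addrC subrK -/(cdot a _).
set r := fun j => G (z + h) 0 j - G z 0 j - cdot (B j) h.
have cdot_row : cdot (\row_k \sum_j a 0 j * B j 0 k) h = \sum_j a 0 j * cdot (B j) h.
  rewrite /cdot; under eq_bigr do rewrite mxE big_distrl /=.
  rewrite exchange_big /=; apply: eq_bigr => j _.
  by rewrite mulr_sumr; apply: eq_bigr => k _; rewrite mulrA.
have sum_r : \sum_j a 0 j * r j = cdot a (G (z + h) - G z) - \sum_j a 0 j * cdot (B j) h.
  by rewrite {1 2}/cdot -sumrB; apply: eq_bigr => j _; rewrite /r !mxE mulrBr.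
have -> : F (G (z + h)) - F (G z) - cdot (\row_k \sum_j a 0 j * B j 0 k) h =
    F (G (z + h)) - F (G z) - cdot a (G (z + h) - G z) + \sum_j a 0 j * r j.
  by rewrite cdot_row sum_r; ring.
apply: le_trans (ler_cabsD _ _) _; rewrite lerD2l.
apply: le_trans (ler_cabs_sum _) _.
by apply: ler_sum => j _; rewrite cabsM.
Qed.

End ComplexDerivative.

Section BlochSeminorm.
Variables (R : realType) (n : nat).
Local Notation C := R[i].
Local Notation Cn := 'rV[C]_n.
Implicit Types (D : set Cn) (f : Cn -> C) (z : Cn).

Lemma grad_cderiv_at f z : (exists a, cderiv_at f z a) -> cderiv_at f z (grad f z).
Proof. exact: xgetPex. Qed.

Lemma grad_eq f z a : cderiv_at f z a -> grad f z = a.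
Proof. by move=> da; apply: (cderiv_at_unique _ da); apply: grad_cderiv_at; exists a. Qed.

Lemma holo_on_const D (c : C) : holo_on D (fun _ => c).
Proof. by move=> z _; exists 0; exact: cderiv_at_const. Qed.

Lemma holo_on_affine D f (k d : C) : holo_on D f -> holo_on D (fun w => k * (f w - d)).
Proof.
by move=> hf z Dz; have [a da] := hf z Dz; exists (k *: a); exact: cderiv_at_affine.
Qed.

Lemma holo_on_Wop D (psi f : Cn -> C) (phi : Cn -> Cn) :
  holo_on D psi -> holo_self_map D phi -> holo_on D f -> holo_on D (Wop psi phi f).
Proof.
move=> hpsi [hphi Dphi] hf z Dz.
have [a da] := hpsi z Dz; have [b db] := hf (phi z) (Dphi z Dz).
have dphi j : cderiv_at (fun w => phi w 0 j) z (grad (fun w => phi w 0 j) z).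
  exact: grad_cderiv_at (hphi j z Dz).
by eexists; rewrite /Wop; apply: cderiv_at_mul da (cderiv_at_comp db dphi).
Qed.

Lemma Qf_const_le0 D (c : C) z : (Qf D (fun _ => c) z <= 0)%E.
Proof.
apply: ge_ereal_sup => _ [u _ <-].
rewrite /nablaf (grad_eq (cderiv_at_const c z)) big1 ?cabs0 ?mul0r // => k _.
by rewrite mxE mul0r.
Qed.

Lemma beta_const_le0 D (c : C) : (beta D (fun _ => c) <= 0)%E.
Proof. by apply: ge_ereal_sup => _ [z _ <-]; exact: Qf_const_le0. Qed.

Lemma Qf_affine D f z (k d : C) : (exists a, cderiv_at f z a) ->
  (Qf D (fun w => (k * (f w - d))%R) z <= (cabs k)%:E * Qf D f z)%E.
Proof.
move=> [a da]; apply: ge_ereal_sup => _ [u u0 <-].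
rewrite /nablaf (grad_eq (cderiv_at_affine k d da)) -(grad_eq da).
have -> : \sum_j (k *: grad f z) 0 j * u 0 j = k * \sum_j grad f z 0 j * u 0 j.
  by rewrite mulr_sumr; apply: eq_bigr => j _; rewrite mxE mulrA.
rewrite cabsM -mulrA EFinM; apply: lee_wpmul2l; first by rewrite lee_fin cabs_ge0.
by apply: ereal_sup_ubound; exists u.
Qed.

Lemma beta_affine D f (k d : C) : holo_on D f ->
  (beta D (fun w => (k * (f w - d))%R) <= (cabs k)%:E * beta D f)%E.
Proof.
move=> hf; apply: ge_ereal_sup => _ [z Dz <-].
apply: le_trans (Qf_affine D k d (hf z Dz)) _.
apply: lee_wpmul2l; first by rewrite lee_fin cabs_ge0.
by apply: ereal_sup_ubound; exists z.
Qed.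

Lemma Qf_ge0 D f z : (0 < n)%N -> (0 <= Qf D f z)%E.
Proof.
move=> n_gt0; apply: le_trans (ereal_sup_ubound _); last first.
  exists (const_mx 1) => //; apply/eqP => /matrixP /(_ 0 (Ordinal n_gt0)).
  by rewrite !mxE => /eqP; rewrite oner_eq0.
by rewrite lee_fin divr_ge0 ?cabs_ge0 ?sqrtr_ge0.
Qed.

Lemma beta_ge0 D f : (0 < n)%N -> D 0 -> (0 <= beta D f)%E.
Proof.
move=> n_gt0 D0; apply: le_trans (ereal_sup_ubound _); last by exists 0.
exact: Qf_ge0.
Qed.

Lemma bloch_betaE D f : (0 < n)%N -> D 0 -> bloch D f ->
  exists2 b : R, 0 <= b & beta D f = b%:E.
Proof.
move=> n_gt0 D0 [_ fin]; have b0 := beta_ge0 f n_gt0 D0.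
exists (fine (beta D f)); first by rewrite fine_ge0.
by rewrite fineK // ge0_fin_numE.
Qed.

Lemma bloch_const D (c : C) : bloch D (fun _ => c).
Proof. by split; [exact: holo_on_const|exact: le_lt_trans (beta_const_le0 D c) (ltry _)]. Qed.

Lemma bloch_affine D f (k d : C) : bloch D f -> bloch D (fun w => k * (f w - d)).
Proof.
move=> [hf fin]; split; first exact: holo_on_affine.
apply: le_lt_trans (beta_affine k d hf) _.
by rewrite lte_mul_pinfty ?lee_fin ?cabs_ge0.
Qed.

Lemma little_bloch_const D (c : C) : little_bloch D (fun _ => c).
Proof.
split; first exact: bloch_const.
by move=> e e0; exists 1; split => // z _ _; apply: le_lt_trans (Qf_const_le0 D c z) _.
Qed.

Lemma little_bloch_affine D f (k d : C) :
  little_bloch D f -> little_bloch D (fun w => k * (f w - d)).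
Proof.
move=> [bf vf]; split; first exact: bloch_affine.
move=> e e0; have k1 : 0 < cabs k + 1 by rewrite ltr_wpDl ?cabs_ge0.
have [r [r0 Hr]] := vf _ (divr_gt0 e0 k1); exists r; split => // z Dz near.
apply: le_lt_trans (Qf_affine D k d (bf.1 z Dz)) _.
apply: le_lt_trans (lee_wpmul2l _ (ltW (Hr z Dz near))) _; first by rewrite lee_fin cabs_ge0.
by rewrite -EFinM lte_fin mulrCA gtr_pMr // ltr_pdivrMr // mul1r ltrDl.
Qed.

End BlochSeminorm.

Lemma ge0_lty_fineK (R : realType) (x : \bar R) : (0 <= x)%E -> (x < +oo)%E -> (fine x)%:E = x.
Proof. by move=> x0 xfin; rewrite fineK // ge0_fin_numE. Qed.

Section WeightedComposition.
Variables (R : realType) (n : nat).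
Local Notation C := R[i].
Local Notation Cn := 'rV[C]_n.

Definition omega_in (D : set Cn) (X : set (Cn -> C)) (w : Cn) : \bar R :=
  ereal_sup [set (cabs (f w))%:E
            | f in [set f | X f /\ f 0 = 0 /\ (bloch_norm D f <= 1)%E]].

Definition upsilon_in (D : set Cn) (X : set (Cn -> C)) (mu : Cn -> R)
    (psi : Cn -> C) (phi : Cn -> Cn) : \bar R :=
  ereal_sup [set ((mu z * cabs (psi z))%:E * omega_in D X (phi z))%E | z in D].

Lemma upsilon_bloch D mu psi phi : upsilon D mu psi phi = upsilon_in D (bloch D) mu psi phi.
Proof. by []. Qed.

Lemma upsilon0_little_bloch D mu psi phi :
  upsilon0 D mu psi phi = upsilon_in D (little_bloch D) mu psi phi.
Proof. by []. Qed.

Variables (D : set Cn) (mu : Cn -> R) (psi : Cn -> C) (phi : Cn -> Cn) (X : set (Cn -> C)).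
Hypotheses (n_gt0 : (0 < n)%N) (D0 : D 0) (mu_gt0 : forall z, D z -> 0 < mu z).
Hypotheses (psi_holo : holo_on D psi) (phi_self : holo_self_map D phi).
Hypotheses (X_bloch : X `<=` bloch D) (X_const : forall c : C, X (fun _ => c))
  (X_affine : forall f (k d : C), X f -> X (fun w => k * (f w - d))).

Local Notation P := (Hinf_norm D mu psi).
Local Notation U := (upsilon_in D X mu psi phi).
Local Notation W := (Wnorm D X mu psi phi).

Lemma weight_psi_ge0 z : D z -> 0 <= mu z * cabs (psi z).
Proof. by move=> Dz; rewrite mulr_ge0 ?cabs_ge0 // ltW // mu_gt0. Qed.

Lemma Hinf_norm_ge0 (g : Cn -> C) : (0 <= Hinf_norm D mu g)%E.
Proof.
apply: le_trans (ereal_sup_ubound _); last by exists 0.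
by rewrite lee_fin mulr_ge0 ?cabs_ge0 // ltW // mu_gt0.
Qed.

Lemma Hinf_norm_le_Wnorm : (P <= W)%E.
Proof.
apply: ereal_sup_ubound; exists (fun _ => 1).
  split => //; rewrite /bloch_norm cabs1.
  by apply: le_trans (leeD (lexx _) (beta_const_le0 D 1)) _; rewrite adde0.
by congr Hinf_norm; apply/funext => z; rewrite /Wop mulr1.
Qed.

Lemma Wnorm_ge0 : (0 <= W)%E.
Proof. exact: le_trans (Hinf_norm_ge0 psi) Hinf_norm_le_Wnorm. Qed.

Lemma upsilon_in_le_Wnorm : (U <= W)%E.
Proof.
apply: ge_ereal_sup => _ [z Dz <-]; set a := mu z * cabs (psi z).
have [->|a_neq0] := eqVneq a 0; first by rewrite mul0e Wnorm_ge0.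
have a_gt0 : 0 < a by rewrite lt_def a_neq0 weight_psi_ge0.
have := Wnorm_ge0; case EW : W => [w| |] w0; [|by rewrite leey|by []].
rewrite -[w](divfK a_neq0) mulrC (EFinM a); apply: lee_wpmul2l; first by rewrite lee_fin ltW.
apply: ge_ereal_sup => _ [f [Xf [f00 nf]] <-].
rewrite lee_fin ler_pdivlMr // mulrC -mulrA -cabsM -lee_fin -EW.
have Wf : ((mu z * cabs (Wop psi phi f z))%:E <= Hinf_norm D mu (Wop psi phi f))%E.
  by apply: ereal_sup_ubound; exists z.
by apply: le_trans Wf _; apply: ereal_sup_ubound; exists f.
Qed.

Lemma omega_in_ge0 w : (0 <= omega_in D X w)%E.
Proof.
apply: le_trans (ereal_sup_ubound _); last first.
  exists (fun _ => 0) => //; split => //; split => //.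
  by rewrite /bloch_norm cabs0 add0e (le_trans (beta_const_le0 D 0)) ?lee_fin.
by rewrite cabs0.
Qed.

Lemma upsilon_in_ge0 : (0 <= U)%E.
Proof.
apply: le_trans (ereal_sup_ubound _); last by exists 0.
by rewrite mule_ge0 ?omega_in_ge0 // lee_fin weight_psi_ge0.
Qed.

Lemma omega_in_ge_normalized f (b c : R) w : X f -> beta D f = b%:E ->
  0 < c -> c * b <= 1 -> ((c * cabs (f w - f 0))%:E <= omega_in D X w)%E.
Proof.
move=> Xf fb c0 cb; apply: ereal_sup_ubound.
exists (fun w => rC c * (f w - f 0)); last by rewrite cabsM cabs_rC gtr0_norm.
split; first exact: X_affine.
split; first by rewrite subrr mulr0.
rewrite /bloch_norm subrr mulr0 cabs0 add0e.
apply: le_trans (beta_affine _ _ (X_bloch Xf).1) _.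
by rewrite fb cabs_rC gtr0_norm // -EFinM lee_fin.
Qed.

Lemma weighted_increment_le f z (u b : R) : D z -> X f -> U = u%:E -> beta D f = b%:E ->
  mu z * cabs (psi z) * cabs (f (phi z) - f 0) <= u * b.
Proof.
move=> Dz Xf Uu fb; set a := mu z * cabs (psi z); set x := cabs (f (phi z) - f 0).
have b0 : 0 <= b by rewrite -lee_fin -fb beta_ge0.
have u0 : 0 <= u by rewrite -lee_fin -Uu upsilon_in_ge0.
have a0 : 0 <= a by exact: weight_psi_ge0.
have near_b e : 0 < e -> a * x <= u * (b + e).
  move=> e0; have be0 : 0 < b + e by rewrite ltr_wpDl.
  have c0 : 0 < (b + e)^-1 by rewrite invr_gt0.
  have cb : (b + e)^-1 * b <= 1 by rewrite mulrC ler_pdivrMr // mul1r lerDl ltW.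
  have Ophi := omega_in_ge_normalized (phi z) Xf fb c0 cb.
  have Ua : (a%:E * omega_in D X (phi z) <= U)%E by apply: ereal_sup_ubound; exists z.
  have := le_trans (lee_wpmul2l (a0 : (0 <= a%:E)%E) Ophi) Ua.
  by rewrite Uu -EFinM lee_fin mulrCA ler_pdivrMl // [_ * u]mulrC.
apply/ler_addgt0Pr => e e0; have u1 : 0 < u + 1 by rewrite ltr_wpDl.
apply: le_trans (near_b _ (divr_gt0 e0 u1)) _.
by rewrite mulrDr lerD2l mulrCA ger_pMr // ler_pdivrMr // mul1r lerDl.
Qed.

Lemma Hinf_norm_Wop_le f (p u : R) : X f -> P = p%:E -> U = u%:E ->
  (Hinf_norm D mu (Wop psi phi f) <= (Num.max p u)%:E * bloch_norm D f)%E.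
Proof.
move=> Xf Pp Uu; have [b b0 fb] := bloch_betaE n_gt0 D0 (X_bloch Xf).
rewrite /bloch_norm fb -EFinD -EFinM; apply: ge_ereal_sup => _ [z Dz <-].
rewrite lee_fin /Wop cabsM mulrA.
have ap : mu z * cabs (psi z) <= p by rewrite -lee_fin -Pp; apply: ereal_sup_ubound; exists z.
have f_split : cabs (f (phi z)) <= cabs (f 0) + cabs (f (phi z) - f 0).
  by apply: le_trans (ler_cabsD _ _); rewrite addrC subrK.
apply: le_trans (ler_wpM2l (weight_psi_ge0 Dz) f_split) _.
rewrite mulrDr [X in _ <= X]mulrDr lerD //.
  by rewrite ler_wpM2r ?cabs_ge0 // (le_trans ap) // le_max lexx.
apply: le_trans (weighted_increment_le Dz Xf Uu fb) _.
by rewrite ler_wpM2r // le_max lexx orbT.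
Qed.

Lemma Wnorm_le_max : (P < +oo)%E -> (U < +oo)%E -> (W <= maxe P U)%E.
Proof.
move=> Pfin Ufin; have Pp := esym (ge0_lty_fineK (Hinf_norm_ge0 psi) Pfin).
have Uu := esym (ge0_lty_fineK upsilon_in_ge0 Ufin).
rewrite [in maxe _ _]Pp [in maxe _ _]Uu -EFin_max.
apply: ge_ereal_sup => _ [f [Xf nf] <-]; apply: le_trans (Hinf_norm_Wop_le Xf Pp Uu) _.
rewrite -[X in (_ <= X)%E]mule1; apply: lee_wpmul2l nf.
by rewrite lee_fin le_max -lee_fin -Pp Hinf_norm_ge0.
Qed.

Lemma Wbounded_Wnorm_lt : Wbounded D X mu psi phi -> (W < +oo)%E.
Proof.
move=> [_ [M HM]]; apply: le_lt_trans (ltry (Num.max M 0)).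
apply: ge_ereal_sup => _ [f [Xf nf] <-]; apply: le_trans (HM f Xf) _.
have [b b0 fb] := bloch_betaE n_gt0 D0 (X_bloch Xf).
move: nf; rewrite /bloch_norm fb -EFinD -EFinM !lee_fin => nf.
have t0 : 0 <= cabs (f 0) + b by rewrite addr_ge0 ?cabs_ge0.
apply: le_trans (_ : _ <= Num.max M 0 * (cabs (f 0) + b)) _.
  by rewrite ler_wpM2r // le_max lexx.
by rewrite ler_piMr // le_max lexx orbT.
Qed.

Lemma Wbounded_in_iff : Wbounded D X mu psi phi <-> Hinf D mu psi /\ (U < +oo)%E.
Proof.
split=> [Wb | [[_ Pfin] Ufin]].
  have Wfin := Wbounded_Wnorm_lt Wb.
  split; first split => //; first exact: le_lt_trans Hinf_norm_le_Wnorm Wfin.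
  exact: le_lt_trans upsilon_in_le_Wnorm Wfin.
have Pp := esym (ge0_lty_fineK (Hinf_norm_ge0 psi) Pfin).
have Uu := esym (ge0_lty_fineK upsilon_in_ge0 Ufin).
split; last by exists (Num.max (fine P) (fine U)) => f Xf; exact: Hinf_norm_Wop_le.
move=> f Xf; split; first exact: holo_on_Wop (X_bloch Xf).1.
apply: le_lt_trans (Hinf_norm_Wop_le Xf Pp Uu) _.
have [b _ fb] := bloch_betaE n_gt0 D0 (X_bloch Xf).
by rewrite /bloch_norm fb -EFinD -EFinM ltry.
Qed.

Lemma Wnorm_in_eq : Wbounded D X mu psi phi -> W = maxe P U.
Proof.
move=> Wb; have [[_ Pfin] Ufin] := Wbounded_in_iff.1 Wb.
apply/le_anti; rewrite Wnorm_le_max //=.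
by rewrite ge_max Hinf_norm_le_Wnorm upsilon_in_le_Wnorm.
Qed.

End WeightedComposition.

Theorem theorem3p2 (R : realType) (n : nat) (D : set 'rV[R[i]]_n)
    (mu : 'rV[R[i]]_n -> R) (psi : 'rV[R[i]]_n -> R[i])
    (phi : 'rV[R[i]]_n -> 'rV[R[i]]_n) :
  (0 < n)%N ->
  domain D -> cbounded_set D -> homogeneous D -> D 0 ->
  weight D mu -> holo_on D psi -> holo_self_map D phi ->
  ((Wbounded D (bloch D) mu psi phi <->
      (Hinf D mu psi /\ (upsilon D mu psi phi < +oo)%E)) /\
   (Wbounded D (bloch D) mu psi phi ->
      Wnorm D (bloch D) mu psi phi
        = maxe (Hinf_norm D mu psi) (upsilon D mu psi phi)))
  /\
  ((Wbounded D (little_bloch D) mu psi phi <->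
      (Hinf D mu psi /\ (upsilon0 D mu psi phi < +oo)%E)) /\
   (Wbounded D (little_bloch D) mu psi phi ->
      Wnorm D (little_bloch D) mu psi phi
        = maxe (Hinf_norm D mu psi) (upsilon0 D mu psi phi))).
Proof.
move=> n_gt0 _ _ _ D0 [_ mu_gt0] psi_holo phi_self.
have bloch_sub : bloch D `<=` bloch D by [].
have little_sub : little_bloch D `<=` bloch D by move=> f [].
rewrite upsilon_bloch upsilon0_little_bloch; split; split.
- exact: Wbounded_in_iff n_gt0 D0 mu_gt0 psi_holo phi_self bloch_sub
    (@bloch_const _ _ D) (@bloch_affine _ _ D).
- exact: Wnorm_in_eq n_gt0 D0 mu_gt0 psi_holo phi_self bloch_sub
    (@bloch_const _ _ D) (@bloch_affine _ _ D).
- exact: Wbounded_in_iff n_gt0 D0 mu_gt0 psi_holo phi_self little_sub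
    (@little_bloch_const _ _ D) (@little_bloch_affine _ _ D).
- exact: Wnorm_in_eq n_gt0 D0 mu_gt0 psi_holo phi_self little_sub
    (@little_bloch_const _ _ D) (@little_bloch_affine _ _ D).
Qed.
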